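(* Let $p,q$ be positive integers, $\mathbf{C}=\begin{bmatrix}1 & p\\ q & 1+pq\end{bmatrix}$, $A=pq+2$, $B=\sqrt{A^2-4}$, and $G_n=\left(\frac{A+B}{2}\right)^n+\left(\frac{A-B}{2}\right)^n$, $H_n=\frac{1}{B}\left(\left(\frac{A+B}{2}\right)^n-\left(\frac{A-B}{2}\right)^n\right)$. Then for every positive integer $n$, $$\mathbf{C}^{-n}=\begin{bmatrix}\frac12 G_n+\frac{A-2}{2}H_n & -p\,H_n\\ -q\,H_n & \frac12 G_n-\frac{A-2}{2}H_n\end{bmatrix}.$$ *)

From mathcomp Require Import all_boot all_order all_algebra.
Set Implicit Arguments. Unset Strict Implicit. Unset Printing Implicit Defensive.
Import GRing.Theory Num.Theory.
Local Open Scope ring_scope.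

Definition Cmat (R : nzRingType) (p q : nat) : 'M[R]_2 :=
  \matrix_(i < 2, j < 2)
    (if (i == 0%N :> nat) then (if (j == 0%N :> nat) then 1 else p%:R)
     else (if (j == 0%N :> nat) then q%:R else 1 + (p * q)%:R)).

Definition Aval (R : nzRingType) (p q : nat) : R := (p * q + 2)%:R.
Definition Bval (R : rcfType) (p q : nat) : R := Num.sqrt (Aval R p q ^+ 2 - 4).
Definition Gn (R : rcfType) (p q n : nat) : R :=
  ((Aval R p q + Bval R p q) / 2) ^+ n + ((Aval R p q - Bval R p q) / 2) ^+ n.
Definition Hn (R : rcfType) (p q n : nat) : R :=
  (Bval R p q)^-1 * (((Aval R p q + Bval R p q) / 2) ^+ n
                     - ((Aval R p q - Bval R p q) / 2) ^+ n).

(* C has trace A and determinant 1, hence so has D := C^-1 = adj C, and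
   Cayley-Hamilton gives D^2 = A D - 1.  Split A = a + b with a b = 1, namely
   a, b = (A +- B) / 2.  In any algebra, M^2 = (a + b) M - a b forces
   M^n = V_n / 2 + U_n (M - (a + b) / 2) with the Lucas sequences
   V_n = a^n + b^n = G_n and U_n = (a^n - b^n) / (a - b) = H_n; the entries of
   D - A/2 are (A - 2)/2, -p, -q and -(A - 2)/2. *)

From mathcomp Require Import all_boot all_order all_algebra.
From mathcomp Require Import ring lra.
Import GRing.Theory Num.Theory.
Local Open Scope ring_scope.

Set Implicit Arguments.
Unset Strict Implicit.

Section Lucas.

Variables (F : fieldType) (a b : F).
Hypotheses (two_neq0 : (2 : F) != 0) (a_neq_b : a - b != 0).

Definition lucasV n := a ^+ n + b ^+ n.
Definition lucasU n := (a - b)^-1 * (a ^+ n - b ^+ n).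

Lemma lucasUSS n :
  lucasU n.+2 = (a + b) * lucasU n.+1 - a * b * lucasU n.
Proof. by rewrite /lucasU !exprS; field. Qed.

Lemma lucasVS n :
  lucasV n.+1 / 2 = (a + b) / 2 * lucasU n.+1 - a * b * lucasU n.
Proof. by rewrite /lucasU /lucasV !exprS; field; rewrite a_neq_b two_neq0. Qed.

Section Quadratic.

Variables (V : algType F) (M : V).
Hypothesis sqrM : M * M = (a + b) *: M - (a * b)%:A.

Lemma exprS_lucasU n : M ^+ n.+1 = lucasU n.+1 *: M - (a * b * lucasU n)%:A.
Proof.
elim: n => [|n IHn].
  rewrite expr1 /lucasU !expr1 expr0 subrr !mulr0 mulVf //.
  by rewrite scale1r scale0r subr0.
rewrite exprSr IHn mulrBl mulr_algl -scalerAl sqrM scalerBr !scalerA.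
by rewrite addrAC -scalerBl ![lucasU n.+1 * _]mulrC -lucasUSS.
Qed.

Lemma expr_lucas n :
  M ^+ n = (lucasV n / 2)%:A + lucasU n *: (M - ((a + b) / 2)%:A).
Proof.
case: n => [|n].
  rewrite expr0 /lucasV /lucasU !expr0 subrr mulr0 scale0r addr0.
  by rewrite (divff two_neq0) scale1r.
rewrite exprS_lucasU lucasVS scalerBl scalerBr scalerA [lucasU _ * _]mulrC.
by rewrite [RHS]addrC addrA subrK.
Qed.

End Quadratic.

End Lucas.

Definition mx22 {R : nzRingType} (a b c d : R) : 'M[R]_2 :=
  \matrix_(i < 2, j < 2)
    (if (i == 0%N :> nat) then (if (j == 0%N :> nat) then a else b)
     else (if (j == 0%N :> nat) then c else d)).

Lemma mx22_mul (R : nzRingType) (a b c d a' b' c' d' : R) :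
  mx22 a b c d * mx22 a' b' c' d' =
  mx22 (a * a' + b * c') (a * b' + b * d') (c * a' + d * c') (c * b' + d * d').
Proof.
apply/matrixP => i j; rewrite -mulmxE !mxE !big_ord_recl big_ord0 !mxE /=.
by case: i => [[|[|//]] ?]; case: j => [[|[|//]] ?] /=; rewrite addr0.
Qed.

Lemma mx22_scalar (R : nzRingType) (k : R) : mx22 k 0 0 k = k%:M.
Proof.
by apply/matrixP => i j; rewrite !mxE; case: i => [[|[|//]] ?]; case: j => [[|[|//]] ?].
Qed.

Lemma mx22_Cayley_Hamilton (R : comNzRingType) (a b c d : R) :
  mx22 a b c d * mx22 a b c d =
  (a + d) *: mx22 a b c d - (a * d - b * c)%:A.
Proof.
apply/matrixP => i j; rewrite mx22_mul !mxE.
by case: i => [[|[|//]] ?]; case: j => [[|[|//]] ?] /=; ring.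
Qed.

Lemma mx22_inv (R : comUnitRingType) (a b c d : R) : a * d - b * c = 1 ->
  (mx22 a b c d)^-1 = mx22 d (- b) (- c) a.
Proof.
move=> det1.
have mulM : mx22 a b c d * mx22 d (- b) (- c) a = 1.
  by rewrite mx22_mul -[1]mx22_scalar -det1; congr mx22; ring.
have [unitM _] := mulmx1_unit mulM.
by rewrite -[LHS]mulr1 -mulM mulKr.
Qed.

Lemma Bval_sqr (R : rcfType) (p q : nat) : Bval R p q ^+ 2 = Aval R p q ^+ 2 - 4.
Proof.
rewrite sqr_sqrtr // /Aval natrD.
by have := ler0n R (p * q); nra.
Qed.

Lemma Bval_gt0 (R : rcfType) (p q : nat) : (0 < p)%N -> (0 < q)%N -> 0 < Bval R p q.
Proof.
move=> p_gt0 q_gt0; rewrite sqrtr_gt0 /Aval natrD.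
have : (1 : R) <= (p * q)%:R by rewrite ler1n muln_gt0 p_gt0.
by nra.
Qed.

Theorem proposition2 (R : rcfType) (p q n : nat) :
  (0 < p)%N -> (0 < q)%N -> (0 < n)%N ->
  (Cmat R p q) ^- n =
  \matrix_(i < 2, j < 2)
    (if (i == 0%N :> nat) then
       (if (j == 0%N :> nat)
        then Gn R p q n / 2 + (Aval R p q - 2) / 2 * Hn R p q n
        else - (p%:R * Hn R p q n))
     else
       (if (j == 0%N :> nat)
        then - (q%:R * Hn R p q n)
        else Gn R p q n / 2 - (Aval R p q - 2) / 2 * Hn R p q n)).
Proof.
move=> p_gt0 q_gt0 _. (* the formula holds for n = 0 as well *)
set A := Aval R p q; set B := Bval R p q.
set a := (A + B) / 2; set b := (A - B) / 2.
have A_pq : A = p%:R * q%:R + 2 by rewrite /A /Aval natrD natrM.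
have two_neq0 : (2 : R) != 0 by rewrite pnatr_eq0.
have ab_sum : a + b = A by rewrite /a /b; field.
have ab_prod : a * b = 1.
  have -> : a * b = (A ^+ 2 - B ^+ 2) / 4 by rewrite /a /b; field.
  by rewrite Bval_sqr -/A; field.
have ab_diff : a - b = B by rewrite /a /b; field.
have a_neq_b : a - b != 0 by rewrite ab_diff lt0r_neq0 // Bval_gt0.
have -> : Cmat R p q = mx22 1 p%:R q%:R (1 + (p * q)%:R) by [].
rewrite -exprVn mx22_inv; last by rewrite natrM; ring.
rewrite (expr_lucas two_neq0 a_neq_b); last first.
  rewrite mx22_Cayley_Hamilton ab_sum ab_prod A_pq natrM.
  by congr (_ *: _ - _%:A); ring.
have Hn_lucasU : Hn R p q n = lucasU a b n by rewrite /lucasU ab_diff.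
rewrite -[Gn R p q n]/(lucasV a b n) Hn_lucasU.
apply/matrixP => i j; rewrite !mxE ab_sum A_pq natrM.
by case: i => [[|[|//]] ?]; case: j => [[|[|//]] ?] /=; field.
Qed.
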